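(* $\displaystyle\lim_{n\to\infty}\frac{l(8n+4)}{l(8n+3)}=\frac{257}{85}.$
   Context: For $n\ge 0$, $c(n)=\sum_{i=0}^{n}\left(\binom{n}{i}\bmod 2\right)2^{i}$, the integer whose binary digits form the $n$-th row of Pascal's triangle modulo $2$; one has $c(2n)\equiv1\pmod4$, and $l(n)=\frac{c(2n)-1}{4}$. (Stated in the paper as a conjecture of R. Stephan and proved there.) *)

From Stdlib Require Import Reals.
From mathcomp Require Import all_boot.


Definition c (n : nat) : nat := \sum_(0 <= i < n.+1) ('C(n, i) %% 2) * 2 ^ i.

(* l(n) = (c(2n) - 1)/4 ; exact division since c(2n) = 1 mod 4 *)
Definition l (n : nat) : nat := (c n.*2 - 1) %/ 4.

From Stdlib Require Import Reals Lra.
From mathcomp Require Import all_boot zify.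

(* Row n of Pascal's triangle mod 2 is the polynomial (1 + X)^n over F_2, and
   c n is its value at X = 2.  Over F_2, (1 + X)^(2n) = (1 + X^2)^n, so
   doubling n squares the evaluation point, and an odd index 2n + 1 adds a
   factor 1 + X.  Since 2(8m + 4) = 8(2m + 1) and 2(8m + 3) = 2(2(2(2m) + 1) + 1),
   this gives c(2(8m + 4)) = 257 Q and c(2(8m + 3)) = 5 * 17 * Q with the same
   Q = (1 + X)^m evaluated at 2^16.  Hence the ratio of the l's is
   (257 Q - 1) / (85 Q - 1), and Q > m tends to infinity. *)
Lemma odd_binSS n k : odd 'C(n.+2, k.+2) = odd 'C(n, k.+2) (+) odd 'C(n, k).
Proof. by rewrite !binS !oddD addbA addbK. Qed.

Lemma odd_bin_double_odd n k : odd 'C(n.*2, k.*2.+1) = false.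
Proof.
elim: n k => [|n IHn] [|k]; rewrite ?bin0n // doubleS.
- by rewrite !binS bin0 bin1 !oddD odd_double.
- by rewrite doubleS odd_binSS -doubleS !IHn.
Qed.

Lemma odd_bin_double n k : odd 'C(n.*2, k.*2) = odd 'C(n, k).
Proof.
elim: n k => [|n IHn] [|k]; rewrite ?bin0 // !doubleS odd_binSS -doubleS !IHn.
by rewrite binS oddD addbC.
Qed.

Lemma odd_bin_doubleS n k : odd 'C(n.*2.+1, k.*2) = odd 'C(n, k).
Proof.
case: k => [|k]; first by rewrite !bin0.
by rewrite doubleS binS oddD odd_bin_double_odd addbF -doubleS odd_bin_double.
Qed.

Lemma odd_bin_doubleS_odd n k : odd 'C(n.*2.+1, k.*2.+1) = odd 'C(n, k).
Proof. by rewrite binS oddD odd_bin_double_odd odd_bin_double. Qed.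

Definition pascal2 (b n : nat) : nat := \sum_(0 <= i < n.+1) odd 'C(n, i) * b ^ i.

Lemma c_pascal2 n : c n = pascal2 2 n.
Proof. by apply: eq_bigr => i _; rewrite modn2. Qed.

Lemma pascal2_widen b n N :
  n < N -> pascal2 b n = \sum_(0 <= i < N) odd 'C(n, i) * b ^ i.
Proof.
move=> ltnN; rewrite /pascal2 (big_nat_widen _ _ _ _ _ ltnN) big_mkcond /=.
by apply: eq_bigr => i _; case: ltnP => // /bin_small->.
Qed.

Lemma big_nat_double (F : nat -> nat) N :
  \sum_(0 <= i < N.*2) F i = \sum_(0 <= i < N) (F i.*2 + F i.*2.+1).
Proof.
elim: N => [|N IHN]; first by rewrite !big_geq.
by rewrite doubleS !big_nat_recr //= IHN addnA.
Qed.

Lemma pascal2_double b n : pascal2 b n.*2 = pascal2 (b ^ 2) n.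
Proof.
rewrite (@pascal2_widen _ _ n.+1.*2) ?ltn_double // big_nat_double.
by apply: eq_bigr => i _; rewrite odd_bin_double_odd odd_bin_double addn0 -mul2n expnM.
Qed.

Lemma pascal2_doubleS b n : pascal2 b n.*2.+1 = b.+1 * pascal2 (b ^ 2) n.
Proof.
rewrite (@pascal2_widen _ _ n.+1.*2); last by rewrite doubleS.
rewrite big_nat_double big_distrr.
apply: eq_bigr => i _; rewrite odd_bin_doubleS odd_bin_doubleS_odd -mul2n expnS expnM.
by rewrite /= mulSn mulnCA.
Qed.

Lemma pascal2_mod b n : pascal2 b n = 1 %[mod b].
Proof.
rewrite /pascal2 big_nat_recl // bin0 expn0 mul1n.
have /dvdnP[q ->] : b %| \sum_(0 <= i < n) odd 'C(n, i.+1) * b ^ i.+1.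
  by apply: dvdn_sum => i _; rewrite expnS dvdn_mull ?dvdn_mulr.
by rewrite addnC modnMDl.
Qed.

Lemma pascal2_gt b n : 1 < b -> n < pascal2 b n.
Proof.
move=> gt1b; rewrite /pascal2 big_nat_recr //= binn mul1n.
exact: leq_trans (ltn_expl n gt1b) (leq_addl _ _).
Qed.

Lemma four_l_addn1 n : 4 * l n + 1 = c n.*2.
Proof.
have c_mod4 : c n.*2 = 1 %[mod 4] by rewrite c_pascal2 pascal2_double pascal2_mod.
rewrite /l; set x := c n.*2.
have -> : x = x %/ 4 * 4 + 1 by rewrite {1}(divn_eq x 4) c_mod4.
by rewrite addnK mulnK // mulnC.
Qed.

Lemma c_double_8n4 m : c (8 * m + 4).*2 = 257 * pascal2 (2 ^ 16) m.
Proof.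
have -> : (8 * m + 4).*2 = m.*2.+1.*2.*2.*2 by lia.
by rewrite c_pascal2 !pascal2_double pascal2_doubleS -!expnM.
Qed.

Lemma c_double_8n3 m : c (8 * m + 3).*2 = 85 * pascal2 (2 ^ 16) m.
Proof.
have -> : (8 * m + 3).*2 = m.*2.*2.+1.*2.+1.*2 by lia.
by rewrite c_pascal2 pascal2_double !pascal2_doubleS pascal2_double mulnA -!expnM.
Qed.

Local Open Scope R_scope.

Lemma INR_l n : INR (l n) = (INR (c n.*2) - 1) / 4.
Proof. rewrite -four_l_addn1 plus_INR mult_INR /=; field. Qed.

Lemma ratio_dist_le (x : R) :
  1 <= x -> Rabs ((257 * x - 1) / 4 / ((85 * x - 1) / 4) - 257 / 85) <= / x.
Proof.
move=> x_ge1.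
have -> : (257 * x - 1) / 4 / ((85 * x - 1) / 4) - 257 / 85 = 172 / (85 * (85 * x - 1)).
  by field; lra.
rewrite Rabs_right; last by apply/Rle_ge/Rlt_le/Rdiv_lt_0_compat; lra.
apply: Rmult_le_reg_r (_ : 0 < 85 * (85 * x - 1) * x) _; first nra.
by field_simplify; lra.
Qed.

Theorem mainTheorem12 :
  Un_cv (fun n : nat => Rdiv (INR (l (8 * n + 4))) (INR (l (8 * n + 3))))
        (Rdiv (IZR 257) (IZR 85)).
Proof.
move=> eps eps_gt0.
have [N N_eps_gt1] := INR_archimed eps 1 eps_gt0.
exists N => n /leP le_Nn; set Q := pascal2 (2 ^ 16) n.
have N_lt_Q : (N < Q)%N by apply: leq_ltn_trans le_Nn (pascal2_gt _ _ _).
have Q_ge1 : 1 <= INR Q by apply/(le_INR 1)/leP/(leq_ltn_trans (leq0n N)).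
have Q_eps_gt1 : 1 < INR Q * eps by have := lt_INR _ _ (ltP N_lt_Q); nra.
rewrite /Rdist !INR_l c_double_8n4 c_double_8n3 -/Q !mult_INR.
rewrite (INR_IZR_INZ 257) (INR_IZR_INZ 85) /=.
apply: Rle_lt_trans (ratio_dist_le _ Q_ge1) _.
apply: (Rmult_lt_reg_l (INR Q)); first lra.
by rewrite Rinv_r; lra.
Qed.
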